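(* Let $L$ be a subspace of $\bigwedge^{k}V$ and let $I\subseteq[n]$. Consider the procedure: while there exists a pair $i<j$ in $I$ with $N_{j\to i}L\neq L$, choose among all such ordered pairs $(j,i)$ the lexicographically last one, and replace $L$ by $N_{j\to i}L$. Then this procedure terminates after at most $|I|-1+\binom{|I|}{2}$ iterations.
   Context: $\mathbb{F}$ is a field (assumed throughout the paper, for expository purposes, to have characteristic not $2$), $V$ is an $n$-dimensional $\mathbb{F}$-vector space with a fixed basis $e_1,\dots,e_n$, and $\bigwedge V=\bigoplus_k\bigwedge^kV$ is its exterior algebra, with monomial basis $e_S=e_{s_1}\wedge\cdots\wedge e_{s_k}$, $S=\{s_1<\cdots<s_k\}\subseteq[n]$, of $\bigwedge^kV$. For $j\in[n]$, $V^{(j)}$ is the span of $\{e_h:h\neq j\}$. Slow shift: for distinct $i,j\in[n]$ and nonzero $m\in\bigwedge^kV$, write uniquely $m=x+e_j\wedge y$ with $x\in\bigwedge^kV^{(j)}$, $y\in\bigwedge^{k-1}V^{(j)}$, and set $N_{j\to i}m=x+e_i\wedge y$ if this is nonzero, and $N_{j\to i}m=e_j\wedge y$ otherwise (this is the limit as $t\to0$ of the projective action of the linear map $e_j\mapsto e_i+te_j$ fixing the other $e_h$). For a subspace $L$ of $\bigwedge^kV$, $N_{j\to i}L$ is the span of $\{N_{j\to i}m:m\in L\setminus\{0\}\}$; it has the same dimension as $L$. The lexicographic order on ordered pairs $(j,i)$ is based on the usual order on $[n]$. *)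

From HB Require Import structures.
From mathcomp Require Import all_boot all_order all_algebra.
Set Implicit Arguments. Unset Strict Implicit. Unset Printing Implicit Defensive.
Import Order.TTheory GRing.Theory Num.Theory.
Local Open Scope ring_scope.

(* The exterior algebra /\ V of V = F^n (basis e_0..e_{n-1}, indices 'I_n),
   represented by its coordinates in the monomial basis e_S, S ⊆ [n]. *)
Definition ext (F : fieldType) (n : nat) := {ffun {set 'I_n} -> F^o}.

Section Exterior.
Variables (F : fieldType) (n : nat).
Local Notation W := (ext F n).

Definition emon (S : {set 'I_n}) : W := [ffun T => (T == S)%:R].
Definition evec (i : 'I_n) : W := emon [set i].

(* sign of e_S /\ e_T = sign * e_(S ∪ T) for disjoint S, T:
   (-1)^(number of pairs (s,t) in S x T with s > t) *)
Definition wsign (S T : {set 'I_n}) : F :=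
  (-1) ^+ #|[set p in setX S T | (p.2 < p.1)%N]|.

Definition wedge (a b : W) : W :=
  [ffun U => \sum_(S : {set 'I_n}) \sum_(T : {set 'I_n})
      if [&& [disjoint S & T] & S :|: T == U] then wsign S T * a S * b T else 0].

Definition homog (k : nat) (m : W) : Prop := forall S, m S != 0 -> #|S| = k.
(* m lies in /\ V^(j), V^(j) = span{e_h : h != j} *)
Definition avoids (j : 'I_n) (m : W) : Prop := forall S, m S != 0 -> j \notin S.

(* The decomposition m = x + e_j /\ y with x, y in /\ V^(j) (unique) *)
Definition xpart (j : 'I_n) (m : W) : W := [ffun S : {set 'I_n} => if j \in S then 0 else m S].
Definition ypart (j : 'I_n) (m : W) : W :=
  [ffun T : {set 'I_n} => if j \in T then 0 else wsign [set j] T * m (j |: T)].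

Definition slow_shift (j i : 'I_n) (m : W) : W :=
  let v := xpart j m + wedge (evec i) (ypart j m) in
  if v != 0 then v else wedge (evec j) (ypart j m).

Definition is_span (P : W -> Prop) (U : {vspace W}) : Prop :=
  (forall v, P v -> v \in U) /\
  (forall U' : {vspace W}, (forall v, P v -> v \in U') -> (U <= U')%VS).

Definition is_shift_sp (j i : 'I_n) (L L' : {vspace W}) : Prop :=
  is_span (fun v => exists m : W, [/\ m \in L, m != 0 & v = slow_shift j i m]) L'.

Definition shift_moves (j i : 'I_n) (L : {vspace W}) : Prop := ~ is_shift_sp j i L L.

Definition lex_lt (p q : 'I_n * 'I_n) : bool :=
  (p.1 < q.1)%N || ((p.1 == q.1) && (p.2 < q.2)%N).

Definition proc_step (I : {set 'I_n}) (L L' : {vspace W}) : Prop :=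
  exists i j : 'I_n,
    [/\ [&& i \in I, j \in I & (i < j)%N], shift_moves j i L,
        (forall i' j' : 'I_n, i' \in I -> j' \in I -> (i' < j')%N ->
           lex_lt (j, i) (j', i') -> ~ shift_moves j' i' L)
      & is_shift_sp j i L L'].

End Exterior.

(* Write v = x + e_j /\ y with x, y in /\ V^(j).  The linear part of the slow shift is
   shiftlin j i v = x + e_i /\ y, and N_{j->i} L is spanned by shiftlin j i L together with the
   parts e_j /\ y of the vectors of L killed by shiftlin j i.  Hence N_{j->i} L = L exactly when
   L is stable under the projection v |-> x and under transfer j i : v |-> e_i /\ y.
   Commutation relations among these operators show that a step at (j, i) keeps every
   lexicographically later pair fixed and makes L split along e_j, i.e. stable under v |-> x.
   So successive pairs weakly decrease lexicographically, and a pair is repeated only when L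
   did not yet split along e_j.  Each j in I of rank r > 0 thus accounts for at most r + 1
   steps, and these add up to |I| - 1 + C(|I|, 2). *)

From HB Require Import structures.
From mathcomp Require Import all_boot all_order all_algebra ring zify.
Set Implicit Arguments. Unset Strict Implicit. Unset Printing Implicit Defensive.
Import GRing.Theory.
Local Open Scope ring_scope.

Lemma descending_chain_length (t : nat) (P : nat -> nat -> Prop) :
  (forall s, (s < t)%N -> exists p, P s p) ->
  (forall s p p', (s.+1 < t)%N -> P s p -> P s.+1 p' -> (p' < p)%N) ->
  forall p, P 0%N p -> (t <= p.+1)%N.
Proof.
move=> ex dec p P0.
suff chain q s : (s < t)%N -> P s q -> (t <= s + q.+1)%N.
  by have [->|t_gt0] := posnP t; last exact: chain t_gt0 P0.
elim/ltn_ind: q s => q IH s lt_st Psq.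
have [lt_s1t|] := ltnP s.+1 t; last lia.
have [q' Psq'] := ex _ lt_s1t; have lt_q'q := dec _ _ _ lt_s1t Psq Psq'.
have := IH q' lt_q'q s.+1 lt_s1t Psq'; lia.
Qed.

Lemma setU1D1C (T : finType) (a b : T) (R : {set T}) :
  a != b -> a \notin R -> (b |: (a |: R)) :\ a = b |: R.
Proof. by move=> ab aR; rewrite setUCA setU1K // !inE negb_or ab aR. Qed.

Lemma setU1U1_split (T : finType) (a b : T) (U : {set T}) :
  a != b -> a \in U -> b \in U -> exists R, [/\ U = a |: (b |: R), a \notin R & b \notin R].
Proof.
move=> ab aU bU; exists (U :\ a :\ b); rewrite !inE !eqxx andbF.
by rewrite setD1K ?setD1K // !inE eq_sym ab.
Qed.

Lemma ltn_ord_swap n (a b : 'I_n) : a != b -> (b < a)%N = ~~ (a < b)%N.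
Proof. by move=> ab; rewrite ltnNge leq_eqVlt negb_or (ab : (a : nat) != b). Qed.

Lemma ltn_ord_neq n (a b : 'I_n) : (a < b)%N -> b != a.
Proof. by move=> lt_ab; rewrite -val_eqE gtn_eqF. Qed.

Section ShiftOperators.
Variables (F : fieldType) (n : nat).
Local Notation W := (ext F n).
Local Notation xpart := (@xpart F n).
Implicit Types (a b c d i j : 'I_n) (S T U : {set 'I_n}) (u v w : W).

Definition wsign1 a T : F := wsign F [set a] T.

Lemma wsign1E a T : wsign1 a T = (-1) ^+ #|[set t in T | (t < a)%N]|.
Proof.
rewrite /wsign1 /wsign; congr (_ ^+ _).
have -> : [set p in setX [set a] T | (p.2 < p.1)%N] =
          [set (a, t) | t in [set t in T | (t < a)%N]].
  apply/setP => -[p q]; rewrite !inE /=; apply/andP/imsetP => [[/andP[/eqP -> qT] lt]|[t]].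
    by exists q; rewrite ?inE ?qT.
  by rewrite inE => /andP[tT lt] [-> ->]; rewrite eqxx tT.
by rewrite card_imset // => u v [].
Qed.

Lemma wsign1_sqr a T : wsign1 a T * wsign1 a T = 1.
Proof. by rewrite wsign1E -expr2 sqrr_sign. Qed.

Lemma wsign1_sign a T : exists b : bool, wsign1 a T = (-1) ^+ b.
Proof. by exists (odd #|[set t in T | (t < a)%N]|); rewrite signr_odd wsign1E. Qed.

Lemma wsign1U1 a b T : b \notin T -> wsign1 a (b |: T) = (-1) ^+ (b < a)%N * wsign1 a T.
Proof.
move=> bT; rewrite !wsign1E -exprD; congr (_ ^+ _).
case lt_ba: (b < a)%N; last first.
  by apply: eq_card => t; rewrite !inE; case: eqP => [->|]; rewrite ?lt_ba ?andbF.
have -> : [set t in b |: T | (t < a)%N] = b |: [set t in T | (t < a)%N].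
  by apply/setP => t; rewrite !inE; case: eqP => // ->; rewrite lt_ba.
by rewrite cardsU1 inE (negbTE bT).
Qed.

Definition inpart j v : W := [ffun S : {set 'I_n} => if j \in S then v S else 0].

Definition transfer j i v : W :=
  [ffun U : {set 'I_n} => if (i \in U) && (j \notin U :\ i)
             then wsign1 i (U :\ i) * wsign1 j (U :\ i) * v (j |: (U :\ i)) else 0].

Definition shiftlin j i v : W := xpart j v + transfer j i v.

Lemma wedge_evec a w :
  wedge (evec F a) w =
  [ffun U : {set 'I_n} => if a \in U then wsign1 a (U :\ a) * w (U :\ a) else 0].
Proof.
apply/ffunP => U; rewrite !ffunE.
have single S : \sum_(T : {set 'I_n}) (if [disjoint S & T] && (S :|: T == U)
                        then wsign F S T * evec F a S * w T else 0) =
    if S == [set a] then \sum_(T : {set 'I_n}) (if [disjoint [set a] & T] && ([set a] :|: T == U)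
                                 then wsign1 a T * w T else 0) else 0.
  rewrite /evec /emon; case: eqP => [->|Sa].
    by apply: eq_bigr => T _; rewrite ffunE eqxx mulr1.
  apply: big1 => T _; rewrite ffunE; have -> : (S == [set a])%:R = 0 :> F^o by case: eqP.
  by rewrite mulr0 mul0r if_same.
rewrite (eq_bigr _ (fun S _ => single S)) -big_mkcond big_pred1_eq.
case: (boolP (a \in U)) => aU.
  rewrite (bigD1 (U :\ a)) //= big1 ?addr0; first by rewrite disjoints1 setD11 setD1K ?eqxx.
  move=> T TU; case: ifP => // /andP[aT /eqP UE]; case/eqP: TU.
  by rewrite -UE setU1K // -disjoints1.
apply: big1 => T _; case: ifP => // /andP[_ /eqP UE].
by case/negP: aU; rewrite -UE setU11.
Qed.

Lemma wedge_evec_ypart j i v : wedge (evec F i) (ypart j v) = transfer j i v.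
Proof.
rewrite wedge_evec; apply/ffunP => U; rewrite !ffunE.
by case: (i \in U); case: (j \in U :\ i); rewrite /= ?mulr0 ?mulrA.
Qed.

Lemma wedge_evec_ypart_same j v : wedge (evec F j) (ypart j v) = inpart j v.
Proof.
rewrite wedge_evec; apply/ffunP => U; rewrite !ffunE.
by case: ifP => jU //; rewrite setD11 mulrA wsign1_sqr mul1r setD1K.
Qed.

Lemma slow_shiftE j i v :
  slow_shift j i v = if shiftlin j i v != 0 then shiftlin j i v else inpart j v.
Proof. by rewrite /slow_shift wedge_evec_ypart wedge_evec_ypart_same. Qed.

Lemma transferE j i v U : j != i -> transfer j i v U =
  if (i \in U) && (j \notin U)
  then wsign1 i (U :\ i) * wsign1 j (U :\ i) * v (j |: (U :\ i)) else 0.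
Proof. by move=> ji; rewrite ffunE in_setD1 ji. Qed.

Lemma xpart_is_linear j : linear (xpart j).
Proof. by move=> k u w; apply/ffunP => S; rewrite !ffunE; case: ifP; rewrite ?scaler0 ?addr0. Qed.
Lemma inpart_is_linear j : linear (inpart j).
Proof. by move=> k u w; apply/ffunP => S; rewrite !ffunE; case: ifP; rewrite ?scaler0 ?addr0. Qed.
Lemma transfer_is_linear j i : linear (transfer j i).
Proof.
move=> k u w; apply/ffunP => S; rewrite !ffunE; case: ifP; rewrite ?scaler0 ?addr0 //.
by rewrite mulrDr mulrCA.
Qed.
Lemma shiftlin_is_linear j i : linear (shiftlin j i).
Proof.
by move=> k u w; rewrite /shiftlin xpart_is_linear transfer_is_linear scalerDr addrACA.
Qed.

HB.instance Definition _ j := GRing.isLinear.Build F W W *:%R (xpart j) (xpart_is_linear j).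
HB.instance Definition _ j := GRing.isLinear.Build F W W *:%R (inpart j) (inpart_is_linear j).
HB.instance Definition _ j i :=
  GRing.isLinear.Build F W W *:%R (transfer j i) (transfer_is_linear j i).
HB.instance Definition _ j i :=
  GRing.isLinear.Build F W W *:%R (shiftlin j i) (shiftlin_is_linear j i).

Lemma xpart_add_inpart j v : xpart j v + inpart j v = v.
Proof. by apply/ffunP => S; rewrite !ffunE; case: ifP; rewrite ?add0r ?addr0. Qed.

Lemma inpartE j v : inpart j v = v - xpart j v.
Proof. by rewrite -{2}(xpart_add_inpart j v) addrAC subrr add0r. Qed.

Lemma xpart_idem j v : xpart j (xpart j v) = xpart j v.
Proof. by apply/ffunP => S; rewrite !ffunE; case: (j \in S). Qed.

Lemma xpart_inpart j v : xpart j (inpart j v) = 0.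
Proof. by apply/ffunP => S; rewrite !ffunE; case: (j \in S). Qed.

Lemma xpartC a b v : xpart a (xpart b v) = xpart b (xpart a v).
Proof. by apply/ffunP => S; rewrite !ffunE; case: (a \in S); case: (b \in S). Qed.

Lemma transfer_xpart j i v : transfer j i (xpart j v) = 0.
Proof. by apply/ffunP => U; rewrite !ffunE setU11 mulr0 if_same. Qed.

Lemma transfer_inpart j i v : transfer j i (inpart j v) = transfer j i v.
Proof. by rewrite inpartE linearB /= transfer_xpart subr0. Qed.

Lemma xpart_transfer j i v : j != i -> xpart j (transfer j i v) = transfer j i v.
Proof.
move=> ji; apply/ffunP => U; rewrite ffunE !transferE //.
by case: (j \in U); rewrite ?andbF.
Qed.

Lemma xpart_transfer_target j i v : xpart i (transfer j i v) = 0.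
Proof. by apply/ffunP => U; rewrite !ffunE; case: ifP => // iU; rewrite iU. Qed.

Lemma transfer_inpart_target c b v : c != b -> transfer c b (inpart b v) = 0.
Proof.
move=> cb; apply/ffunP => U; rewrite !ffunE; case: ifP => // _.
by rewrite !inE eqxx /= orbF eq_sym (negbTE cb) mulr0.
Qed.

Lemma xpart_transferC c a b v : c != a -> c != b ->
  xpart c (transfer a b v) = transfer a b (xpart c v).
Proof.
move=> ca cb; apply/ffunP => U; rewrite !ffunE !inE (negbTE ca) (negbTE cb) /=.
by case: (c \in U); case: ifP; rewrite ?mulr0.
Qed.

Lemma shiftlin_xpart_fixed j i v : xpart j v = v -> shiftlin j i v = v.
Proof. by move=> vx; rewrite /shiftlin vx -{2}vx transfer_xpart addr0. Qed.

Lemma xpart_shiftlin j i v : j != i -> xpart j (shiftlin j i v) = shiftlin j i v.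
Proof. by move=> ji; rewrite linearD /= xpart_idem xpart_transfer. Qed.

Lemma inpart_shiftlin j i v : j != i -> inpart j (shiftlin j i v) = 0.
Proof. by move=> ji; rewrite inpartE xpart_shiftlin ?subrr. Qed.

Lemma transfer_xpart_target c b v : c != b -> transfer c b (xpart b v) = transfer c b v.
Proof.
by move=> cb; rewrite -{2}(xpart_add_inpart b v) linearD /= transfer_inpart_target ?addr0.
Qed.

Lemma inpart_transfer_target a b v : inpart b (transfer a b v) = transfer a b v.
Proof. by rewrite inpartE xpart_transfer_target subr0. Qed.

Lemma transfer_transfer_target a b c v : c != b -> transfer c b (transfer a b v) = 0.
Proof. by move=> cb; rewrite -(inpart_transfer_target a b v) transfer_inpart_target. Qed.



Lemma transferC a b c d v :
  a != b -> a != c -> a != d -> b != c -> b != d -> c != d ->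
  transfer a b (transfer c d v) = transfer c d (transfer a b v).
Proof.
move=> ab ac ad bc bd cd; apply/ffunP => U.
have [ba ca da] : [/\ b != a, c != a & d != a] by split; rewrite eq_sym.
have [cb db dc] : [/\ c != b, d != b & d != c] by split; rewrite eq_sym.
rewrite !transferE // !inE ?(negbTE ab, negbTE ac, negbTE ad, negbTE bc, negbTE bd, negbTE cd,
  negbTE ba, negbTE ca, negbTE da, negbTE cb, negbTE db, negbTE dc) /=.
case bU: (b \in U); case aU: (a \in U); case dU: (d \in U); case cU: (c \in U);
  rewrite /= ?mulr0 //.
have [R [UE bR dR]] := setU1U1_split bd bU dU.
have aR : a \notin R by apply: contraFN aU; rewrite UE !inE => ->; rewrite !orbT.
have cR : c \notin R by apply: contraFN cU; rewrite UE !inE => ->; rewrite !orbT.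
rewrite UE setU1K ?setU1D1C // ?inE ?negb_or ?bd // [a |: (c |: R)]setUCA.
rewrite !wsign1U1 ?inE ?negb_or ?aR ?cR ?bR ?dR ?ab ?ad ?bd ?cd ?ba ?da ?db ?dc ?bc ?ac ?cb ?ca //.
rewrite (ltn_ord_swap bd) (ltn_ord_swap ad) (ltn_ord_swap ac) (ltn_ord_swap bc).
by case: (b < d)%N; case: (a < d)%N; case: (a < c)%N; case: (b < c)%N; rewrite /=; ring.
Qed.

Lemma transfer_transfer_chain i j j' v : (i < j < j')%N ->
  transfer j' j (transfer j i v) = - inpart j (transfer j' i v).
Proof.
case/andP=> lt_ij lt_jj'; have lt_ij' := ltn_trans lt_ij lt_jj'.
have [[ji j'j] j'i] := (ltn_ord_neq lt_ij, ltn_ord_neq lt_jj', ltn_ord_neq lt_ij').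
have [ij jj' ij'] : [/\ i != j, j != j' & i != j'] by split; rewrite eq_sym.
apply/ffunP => U; rewrite [RHS]ffunE [in RHS]ffunE !transferE // !inE
  ?(negbTE ji, negbTE j'j, negbTE j'i, negbTE ij, negbTE jj', negbTE ij') /=.
case jU: (j \in U); case iU: (i \in U); case j'U: (j' \in U); rewrite /= ?mulr0 ?oppr0 //.
have [R [UE iR jR]] := setU1U1_split ij iU jU.
have j'R : j' \notin R by apply: contraFN j'U; rewrite UE !inE => ->; rewrite !orbT.
rewrite UE setU1D1C // setU1D1C // setU1K ?inE ?negb_or ?ij // [j' |: (j |: R)]setUCA.
rewrite !wsign1U1 ?inE ?negb_or ?iR ?jR ?j'R ?ij ?ji ?jj' ?j'j ?ij' ?j'i //.
rewrite lt_ij lt_jj' lt_ij' !leq_gtF ?(ltnW lt_ij, ltnW lt_jj', ltnW lt_ij') // eqxx /=.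
by have [b ->] := wsign1_sign j R; case: b; ring.
Qed.

Lemma transfer_transfer_relay i j j' v : j != i -> j' != j -> j' != i ->
  transfer j i (transfer j' j v) = xpart j (transfer j' i v).
Proof.
move=> ji j'j j'i; apply/ffunP => U; rewrite [RHS]ffunE !transferE //.
case jU: (j \in U); first by rewrite andbF.
have jUi : j \notin U :\ i by rewrite !inE jU andbF.
rewrite setU1K // !inE eqxx (negbTE j'j) j'i /=.
case: (i \in U); case: (j' \in U); rewrite /= ?mulr0 //.
by have [b ->] := wsign1_sign j (U :\ i); case: b; ring.
Qed.

End ShiftOperators.

Section ShiftSpaces.
Variables (F : fieldType) (n : nat).
Local Notation W := (ext F n).
Local Notation xpart := (@xpart F n).
Local Notation inpart := (@inpart F n).
Local Notation transfer := (@transfer F n).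
Local Notation shiftlin := (@shiftlin F n).
Implicit Types (i j : 'I_n) (u v w : W) (L : {vspace W}).

Definition stable (f : {linear W -> W}) L := (linfun f @: L <= L)%VS.

Lemma stableP (f : {linear W -> W}) L :
  reflect (forall v, v \in L -> f v \in L) (stable f L).
Proof.
apply: (iffP subvP) => fL.
  by move=> v vL; rewrite -(lfunE f); apply/fL/memv_img.
by move=> _ /memv_imgP[v vL ->]; rewrite lfunE fL.
Qed.

Definition shift_space j i L : {vspace W} :=
  (linfun (shiftlin j i) @: L + linfun (inpart j) @: (L :&: lker (linfun (shiftlin j i))))%VS.

Lemma memv_shift_space j i L v : v \in shift_space j i L <->
  exists u k, [/\ u \in L, k \in L, shiftlin j i k = 0 & v = shiftlin j i u + inpart j k].
Proof.
split.
  case/memv_addP => x /memv_imgP[u uL ->] [y /memv_imgP[k /memv_capP[kL]]].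
  by rewrite memv_ker lfunE /= => /eqP k0 -> ->; exists u, k; rewrite !lfunE.
case=> u [k [uL kL k0 ->]]; apply: memv_add.
  by rewrite -(lfunE (shiftlin j i)); apply: memv_img.
rewrite -(lfunE (inpart j)); apply: memv_img.
by rewrite memv_cap kL memv_ker lfunE /= k0 eqxx.
Qed.

Lemma shiftlin_in_shift_space j i L u : u \in L -> shiftlin j i u \in shift_space j i L.
Proof. by move=> uL; apply/memv_shift_space; exists u, 0; rewrite mem0v !linear0 addr0. Qed.

Lemma inpart_in_shift_space j i L k :
  k \in L -> shiftlin j i k = 0 -> inpart j k \in shift_space j i L.
Proof. by move=> kL k0; apply/memv_shift_space; exists 0, k; rewrite mem0v linear0 add0r. Qed.

Lemma is_shift_sp_shift_space j i L : is_shift_sp j i L (shift_space j i L).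
Proof.
split=> [_ [m [mL _ ->]]|U sU].
  rewrite slow_shiftE; case: eqP => [m0|_]; last exact: shiftlin_in_shift_space.
  exact: inpart_in_shift_space.
apply/subvP => _ /memv_shift_space[u [k [uL kL k0 ->]]]; apply: memvD.
  have [u0|u0] := eqVneq (shiftlin j i u) 0; first by rewrite u0 mem0v.
  apply: sU; exists u; rewrite slow_shiftE u0; split=> //.
  by apply: contraNneq u0 => ->; rewrite linear0.
have [->|k_neq0] := eqVneq k 0; first by rewrite linear0 mem0v.
by apply: sU; exists k; rewrite slow_shiftE k0 eqxx.
Qed.

Lemma is_shift_sp_eq j i L L' : is_shift_sp j i L L' -> L' = shift_space j i L.
Proof.
case=> sL' minL'; have [sN minN] := is_shift_sp_shift_space j i L.
by apply/eqP; rewrite eqEsubv minL' ?minN.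
Qed.

Lemma shift_space_fixed j i L : j != i ->
  stable (xpart j) L -> stable (transfer j i) L -> shift_space j i L = L.
Proof.
move=> ji /stableP xL /stableP tL.
have inL v : v \in L -> inpart j v \in L by move=> vL; rewrite inpartE memvB ?xL.
apply/eqP; rewrite eqEsubv; apply/andP; split; apply/subvP => v.
  by case/memv_shift_space => u [k [uL kL _ ->]]; rewrite !memvD ?xL ?tL ?inL.
move=> vL; apply/memv_shift_space; set q := inpart j v.
exists (xpart j v), (q - shiftlin j i q); split.
- exact: xL.
- by rewrite memvB ?inL // memvD ?xL ?tL ?inL.
- by rewrite linearB /= (shiftlin_xpart_fixed _ (xpart_shiftlin _ ji)) subrr.
rewrite shiftlin_xpart_fixed ?xpart_idem // linearB /= inpart_shiftlin // subr0.
by rewrite /q inpartE xpart_inpart subr0 xpart_add_inpart.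
Qed.

Lemma stable_xpart_shift_space j i L : j != i -> stable (xpart j) (shift_space j i L).
Proof.
move=> ji; apply/stableP => _ /memv_shift_space[u [k [uL kL k0 ->]]].
by rewrite linearD /= xpart_shiftlin // xpart_inpart addr0 shiftlin_in_shift_space.
Qed.

Definition shift_stable j i L := stable (xpart j) L && stable (transfer j i) L.

Lemma shift_space_fixedP j i L : j != i -> reflect (shift_space j i L = L) (shift_stable j i L).
Proof.
move=> ji; apply: (iffP andP) => [[]|NL]; first exact: shift_space_fixed.
have xL : stable (xpart j) L by move: (stable_xpart_shift_space L ji); rewrite NL.
split=> //; apply/stableP => v vL /=.
have -> : transfer j i v = shiftlin j i v - xpart j v by rewrite addrC addKr.
by rewrite memvB ?(stableP _ _ xL) // -NL shiftlin_in_shift_space.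
Qed.

Lemma shift_movesP j i L : j != i -> shift_moves j i L <-> ~~ shift_stable j i L.
Proof.
move=> ji; rewrite /shift_moves; split=> [moves | /shift_space_fixedP nfixed /is_shift_sp_eq NL].
  apply/negP => /(shift_space_fixedP _ ji) NL; apply: moves.
  by rewrite -{2}NL; apply: is_shift_sp_shift_space.
exact/nfixed/esym.
Qed.

Lemma stable_shift_space_comm j i L (f : {linear W -> W}) :
  (forall v, f (xpart j v) = xpart j (f v)) ->
  (forall v, f (transfer j i v) = transfer j i (f v)) ->
  stable f L -> stable f (shift_space j i L).
Proof.
move=> fx ft /stableP fL; apply/stableP => _ /memv_shift_space[u [k [uL kL k0 ->]]].
have fs w : f (shiftlin j i w) = shiftlin j i (f w) by rewrite linearD /= fx ft.
have fi w : f (inpart j w) = inpart j (f w) by rewrite !inpartE linearB /= fx.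
rewrite linearD /= fs fi; apply/memv_shift_space; exists (f u), (f k).
by rewrite !fL // -fs k0 linear0.
Qed.

Lemma stable_transfer_shift_space j i i' L : j != i -> j != i' ->
  stable (transfer j i') L -> stable (transfer j i') (shift_space j i L).
Proof.
move=> ji ji' /stableP tL; apply/stableP => _ /memv_shift_space[u [k [uL kL k0 ->]]].
rewrite linearD /= -{1}(xpart_shiftlin u ji) transfer_xpart add0r transfer_inpart.
rewrite -(shiftlin_xpart_fixed i (xpart_transfer k ji')).
exact/shiftlin_in_shift_space/tL.
Qed.

Lemma stable_transfer_shift_space_same j i L : j != i ->
  stable (xpart j) L -> stable (transfer j i) (shift_space j i L).
Proof.
move=> ji /stableP xL; apply/stableP => _ /memv_shift_space[u [k [uL kL k0 ->]]].
rewrite linearD /= -{1}(xpart_shiftlin u ji) transfer_xpart add0r transfer_inpart.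
have -> : transfer j i k = shiftlin j i (- xpart j k).
  rewrite shiftlin_xpart_fixed ?linearN /= ?xpart_idem //.
  by apply/eqP; rewrite -addr_eq0 addrC; apply/eqP.
by rewrite shiftlin_in_shift_space // memvN xL.
Qed.

Lemma stable_transfer_chain_shift_space i j j' L : (i < j < j')%N ->
  stable (transfer j' j) L -> stable (transfer j' i) L ->
  stable (transfer j' j) (shift_space j i L).
Proof.
move=> ijj' /stableP tjL /stableP tiL; case/andP: (ijj') => lt_ij lt_jj'.
have ji := ltn_ord_neq lt_ij; have j'j := ltn_ord_neq lt_jj'.
have j'i := ltn_ord_neq (ltn_trans lt_ij lt_jj').
apply/stableP => _ /memv_shift_space[u [k [uL kL k0 ->]]] /=.
have -> : transfer j' j (shiftlin j i u + inpart j k) =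
          inpart j (transfer j' j u - transfer j' i u).
  rewrite /shiftlin !linearD /= transfer_inpart_target // addr0 transfer_transfer_chain //.
  by rewrite transfer_xpart_target // linearN /= inpart_transfer_target.
apply: inpart_in_shift_space; first by rewrite memvB ?tjL ?tiL.
rewrite /shiftlin !linearB /= xpart_transfer_target transfer_transfer_relay //.
by rewrite transfer_transfer_target // sub0r subr0 addNr.
Qed.

End ShiftSpaces.

Section Procedure.
Variables (F : fieldType) (n : nat).
Local Notation W := (ext F n).
Local Notation xpart := (@xpart F n).
Local Notation transfer := (@transfer F n).
Implicit Types (I : {set 'I_n}) (i j : 'I_n) (L : {vspace W}).

Definition stable_beyond I (p : 'I_n * 'I_n) L :=
  forall i j, i \in I -> j \in I -> (i < j)%N -> lex_lt p (j, i) -> shift_stable j i L.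

Lemma stable_beyond_shift_space I i j L : i \in I -> (i < j)%N ->
  stable_beyond I (j, i) L -> stable_beyond I (j, i) (shift_space j i L).
Proof.
move=> iI lt_ij beyond i0 j0 i0I j0I lt0 lex.
have ji := ltn_ord_neq lt_ij; have j0i0 := ltn_ord_neq lt0.
have /andP[x0L t0L] := beyond i0 j0 i0I j0I lt0 lex.
case/orP: lex => [/= lt_jj0 | /andP[/= /eqP ej lt_ii0]]; last first.
  by subst j0; rewrite /shift_stable stable_xpart_shift_space // stable_transfer_shift_space.
have j0j := ltn_ord_neq lt_jj0; have lt_ij0 := ltn_trans lt_ij lt_jj0.
have j0i := ltn_ord_neq lt_ij0; have jj0 : j != j0 by rewrite eq_sym.
have /andP[_ tiL] : shift_stable j0 i L by apply: beyond; rewrite // /lex_lt /= lt_jj0.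
apply/andP; split.
  apply: stable_shift_space_comm x0L => v /=.
    exact: xpartC.
  by rewrite xpart_transferC.
have [ei0 | i0j] := eqVneq i0 j.
  by subst i0; apply: stable_transfer_chain_shift_space; rewrite ?lt_ij ?lt_jj0.
have ji0 : j != i0 by rewrite eq_sym.
apply: stable_shift_space_comm t0L => v /=; first by rewrite xpart_transferC.
have [ei0 | i0i] := eqVneq i0 i; first by subst i0; rewrite !transfer_transfer_target.
by rewrite transferC // eq_sym.
Qed.

Definition step_at I L L' i j :=
  [/\ [&& i \in I, j \in I & (i < j)%N], shift_moves j i L,
      (forall i' j' : 'I_n, i' \in I -> j' \in I -> (i' < j')%N ->
         lex_lt (j, i) (j', i') -> ~ shift_moves j' i' L)
    & is_shift_sp j i L L'].

Lemma step_at_stable_beyond I L L' i j : step_at I L L' i j -> stable_beyond I (j, i) L.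
Proof.
case=> _ _ last_pair _ i0 j0 i0I j0I lt0 lex.
apply/negPn/negP => /(shift_movesP L (ltn_ord_neq lt0)).
exact: last_pair.
Qed.

Lemma step_at_next I L L' L'' i j i' j' :
  step_at I L L' i j -> step_at I L' L'' i' j' ->
  [/\ ~~ lex_lt (j, i) (j', i'), stable (xpart j) L' & (j', i') = (j, i) -> ~~ stable (xpart j) L].
Proof.
move=> step; have beyond := step_at_stable_beyond step.
case: step => /and3P[iI jI lt_ij] _ _ /is_shift_sp_eq ->.
case=> /and3P[i'I j'I lt_ij'] moves' _ _.
have ji := ltn_ord_neq lt_ij.
have unstable : ~~ shift_stable j' i' (shift_space j i L).
  exact/(shift_movesP _ (ltn_ord_neq lt_ij')).
split.
- apply: contraNN unstable => lex.
  exact: (stable_beyond_shift_space iI lt_ij beyond i'I j'I lt_ij' lex).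
- exact: stable_xpart_shift_space.
case=> ej ei; subst j' i'; apply: contraNN unstable => xL.
by rewrite /shift_stable stable_xpart_shift_space // stable_transfer_shift_space_same.
Qed.

Definition rank_in I x := #|[set y in I | (y < x)%N]|.

Lemma ltn_rank_in I x y : x \in I -> (x < y)%N -> (rank_in I x < rank_in I y)%N.
Proof.
move=> xI lt_xy; apply/proper_card/properP; split.
  by apply/subsetP => z; rewrite !inE => /andP[-> /ltn_trans]; apply.
by exists x; rewrite !inE ?xI ?ltnn.
Qed.

Lemma rank_in_lt_card I x : x \in I -> (rank_in I x < #|I|)%N.
Proof.
move=> xI; apply/proper_card/properP; split; first by apply/subsetP => z; rewrite inE => /andP[].
by exists x; rewrite // !inE ltnn andbF.
Qed.

(* Each j of rank r > 0 owns a block of r + 1 consecutive values of the potential: one for each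
   i below j in I, plus one more while L does not split along e_j; [slot r] is where it starts. *)
Definition slot r := ('C(r, 2) + r.-1)%N.

Lemma ltn_slot a b : (0 < a)%N -> (a < b)%N -> (slot a + a < slot b)%N.
Proof.
move=> a_gt0 lt_ab; have := leq_bin2l 2 lt_ab; rewrite binS bin1 /slot.
have : (a <= b.-1)%N by rewrite -ltnS prednK // (leq_ltn_trans _ lt_ab).
lia.
Qed.

Definition potential I i j L := (slot (rank_in I j) + rank_in I i + ~~ stable (xpart j) L)%N.

Lemma potential_lt_bound I i j L : i \in I -> j \in I -> (i < j)%N ->
  (potential I i j L < #|I|.-1 + 'C(#|I|, 2))%N.
Proof.
move=> iI jI lt_ij; have lt_rank := ltn_rank_in iI lt_ij.
have := ltn_slot (leq_ltn_trans (leq0n _) lt_rank) (rank_in_lt_card jI).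
rewrite /potential /slot; case: (~~ _); lia.
Qed.

Lemma potential_step_decr I L L' L'' i j i' j' :
  step_at I L L' i j -> step_at I L' L'' i' j' ->
  (potential I i' j' L' < potential I i j L)%N.
Proof.
move=> step step'; have [nlex xL' same] := step_at_next step step'.
case: step step' => /and3P[iI jI lt_ij] _ _ _ [/and3P[i'I j'I lt_ij'] _ _ _].
have lt_rank' := ltn_rank_in i'I lt_ij'.
move: nlex; rewrite /lex_lt /= negb_or negb_and -!leqNgt => /andP[le_j'j le_i'i].
rewrite /potential; case: (ltngtP j' j) le_j'j => // [lt_j'j | /val_inj ej'] _.
  have := ltn_slot (leq_ltn_trans (leq0n _) lt_rank') (ltn_rank_in j'I lt_j'j).
  by case: (~~ _); case: (~~ _); lia.
subst j'; rewrite xL' addn0; move: le_i'i; rewrite eqxx /=.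
case: (ltngtP i' i) => // [lt_i'i | /val_inj ei'] _.
  by have := ltn_rank_in i'I lt_i'i; case: (~~ _); lia.
by subst i'; rewrite same // addn1.
Qed.

End Procedure.

Theorem proposition3p10 (F : fieldType) (n k : nat)
    (char_not2 : (2%:R : F) != 0)
    (L : {vspace ext F n}) (I : {set 'I_n}) :
  (forall m, m \in L -> homog k m) ->
  forall (t : nat) (Ls : nat -> {vspace ext F n}),
    Ls 0%N = L ->
    (forall s, (s < t)%N -> proc_step I (Ls s) (Ls s.+1)) ->
    (t <= #|I|.-1 + 'C(#|I|, 2))%N.
Proof.
move=> _ t Ls _ steps; case: t steps => [//|t] steps.
have [i [j step0]] := steps 0%N isT; have [/and3P[iI jI lt_ij] _ _ _] := step0.
apply: leq_trans (potential_lt_bound (Ls 0%N) iI jI lt_ij).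
pose P s p := exists i j, step_at I (Ls s) (Ls s.+1) i j /\ p = potential I i j (Ls s).
apply: (@descending_chain_length _ P); last by exists i, j.
  by move=> s /steps[i' [j' step]]; eexists; exists i', j'.
by move=> s _ _ _ [? [? [step1 ->]]] [? [? [step2 ->]]]; apply: potential_step_decr step1 step2.
Qed.
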